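(* Let $\mathbb K$ be an infinite field, $\mathcal N$ a vector space over $\mathbb K$, and $f:(\mathbb K^d)_{\mathrm{nc}}\to\mathcal N_{\mathrm{nc}}$ a nc function such that for each $n$, $f(X_1,\dots,X_d)$ is a polynomial function of degree $L_n$ in the $dn^2$ commuting variables $(X_i)_{jk}$ ($i=1,\dots,d$; $j,k=1,\dots,n$) with values in $\mathcal N^{n\times n}$ (with the convention $\deg0=-\infty$). Then there exists a unique sequence of homogeneous nc polynomials $f_j\in\mathcal N\langle x_1,\dots,x_d\rangle$ of degree $j$, $j=0,1,\dots$, such that for all $n\in\mathbb N$: $f_j$ vanishes on $(\mathbb K^{n\times n})^d$ for all $j>L_n$; if $L_n>-\infty$ then $f_{L_n}$ does not vanish identically on $(\mathbb K^{n\times n})^d$; and for $X\in(\mathbb K^{n\times n})^d$, $$f(X)=\sum_{j=0}^\infty f_j(X)=\sum_{j=0}^{L_n}f_j(X).$$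
   Context: $n\times n$ matrices over $\mathbb K^d$ are identified with $d$-tuples $X=(X_1,\dots,X_d)$ of $n\times n$ matrices over $\mathbb K$; $(\mathbb K^d)_{\mathrm{nc}}=\coprod_n(\mathbb K^{n\times n})^d$, $\mathcal N_{\mathrm{nc}}=\coprod_n\mathcal N^{n\times n}$. A nc function $f$ satisfies $f((\mathbb K^{n\times n})^d)\subseteq\mathcal N^{n\times n}$, $f(X\oplus Y)=f(X)\oplus f(Y)$ (componentwise block diagonal direct sums), and $f(SXS^{-1})=Sf(X)S^{-1}$ for invertible $S\in\mathbb K^{n\times n}$. $\mathcal G_d$ is the free monoid on $g_1,\dots,g_d$; for $w=g_{i_1}\cdots g_{i_\ell}$, $|w|=\ell$, $x^w=x_{i_1}\cdots x_{i_\ell}$, $X^w=X_{i_1}\cdots X_{i_\ell}$. A homogeneous nc polynomial of degree $j$ with coefficients in $\mathcal N$ is a finite formal sum $p=\sum_{|w|=j}p_wx^w$ with $p_w\in\mathcal N$ (possibly all zero); it is evaluated by $p(X)=\sum_{|w|=j}X^wp_w\in\mathcal N^{n\times n}$, where $(X^wp_w)_{ab}=(X^w)_{ab}p_w$. *)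

From HB Require Import structures.
From mathcomp Require Import all_boot all_order all_algebra.
Set Implicit Arguments. Unset Strict Implicit. Unset Printing Implicit Defensive.
Import Order.TTheory GRing.Theory Num.Theory.
Local Open Scope ring_scope.

Section NC.
Variables (K : fieldType) (N : lmodType K) (d : nat).

Definition infinite_field : Prop := forall s : seq K, exists x : K, x \notin s.

(* A d-tuple of n x n matrices over K, i.e. an n x n matrix over K^d. *)
Definition tup (n : nat) := 'I_d -> 'M[K]_n.

Definition ncfun := forall n : nat, tup n -> 'M[N]_n.

Definition lactmx n (S : 'M[K]_n) (A : 'M[N]_n) : 'M[N]_n :=
  \matrix_(i, j) \sum_(k < n) S i k *: A k j.
Definition ractmx n (A : 'M[N]_n) (T : 'M[K]_n) : 'M[N]_n :=
  \matrix_(i, j) \sum_(k < n) T k j *: A i k.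

Definition nc_function (f : ncfun) : Prop :=
  (forall n m (X : tup n) (Y : tup m),
      f (n + m)%N (fun i => block_mx (X i) 0 0 (Y i)) = block_mx (f n X) 0 0 (f m Y))
  /\ (forall n (X : tup n) (S : 'M[K]_n), S \in unitmx ->
      f n (fun i => S *m X i *m invmx S) = lactmx S (ractmx (f n X) (invmx S))).

(* Commutative monomials in the d n^2 variables (X_i)_{jk}, with exponents <= D. *)
Definition cmon (n D : nat) := {ffun 'I_d * 'I_n * 'I_n -> 'I_D.+1}.
Definition cmon_deg n D (m : cmon n D) : nat := (\sum_v (m v : nat))%N.
Definition cmon_eval n D (m : cmon n D) (X : tup n) : K :=
  \prod_v (X v.1.1 v.1.2 v.2) ^+ (m v).

Definition poly_le n (g : tup n -> 'M[N]_n) (D : nat) : Prop :=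
  exists c : cmon n D -> 'M[N]_n, forall X : tup n,
    g X = \matrix_(a, b) \sum_(m : cmon n D | (cmon_deg m <= D)%N) cmon_eval m X *: c m a b.

(* Degree <= D, with D = None standing for -oo (the zero function). *)
Definition poly_le_opt n (g : tup n -> 'M[N]_n) (D : option nat) : Prop :=
  match D with None => forall X, g X = 0 | Some l => poly_le g l end.

(* g has degree exactly L (L = None means deg = -oo, i.e. g = 0). *)
Definition poly_deg n (g : tup n -> 'M[N]_n) (L : option nat) : Prop :=
  match L with
  | None => forall X, g X = 0
  | Some l => poly_le g l /\
      ~ poly_le_opt g (if l is l'.+1 then Some l' else None)
  end.

(* Homogeneous nc polynomial of degree j with coefficients in N:
   a coefficient p_w for each word w of length j in g_1..g_d. *)
Definition hncpoly (j : nat) := j.-tuple 'I_d -> N.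

Definition word_eval n j (w : j.-tuple 'I_d) (X : tup n) : 'M[K]_n :=
  \big[mulmx/1%:M]_(i <- w) X i.

Definition hnc_eval j (p : hncpoly j) n (X : tup n) : 'M[N]_n :=
  \matrix_(a, b) \sum_(w : j.-tuple 'I_d) word_eval w X a b *: p w.

Definition hnc_vanishes j (p : hncpoly j) n : Prop :=
  forall X : tup n, hnc_eval p X = 0.

(* number of terms in sum_{j=0}^{L}: L+1, or 0 when L = -oo *)
Definition obound (L : option nat) : nat := if L is Some l then l.+1 else 0%N.

Definition nc_decomp (f : ncfun) (L : nat -> option nat)
    (fs : forall j, hncpoly j) : Prop :=
  forall n : nat,
    (forall j, (obound (L n) <= j)%N -> hnc_vanishes (fs j) n)
    /\ (forall l, L n = Some l -> ~ hnc_vanishes (fs l) n)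
    /\ (forall X : tup n, f n X = \sum_(j < obound (L n)) hnc_eval (fs j) X).

End NC.

(* The coefficients of f are read off at one universal point.  For the words of
   length at most m, let Lambda be the d-tuple of left shifts e_w |-> e_(g_i w) on
   their span; the entry (w, empty word) of f(Lambda) is the coefficient of x^w.
   If T Lambda_i = Z_i T, conjugating Z (+) Lambda by [[1, T], [0, 1]] gives
   T f(Lambda) = f(Z) T, and taking T with columns Z^w e_c expresses f(Z) through
   these coefficients whenever all words of length m+1 vanish at Z.  For a general
   X the intertwining fails only on words of length m; replacing X by sX and T by
   s^(-m-1) T makes the defect independent of s, and since f has degree at most m
   and K is infinite, comparing the coefficients of the powers of s removes it.
   Uniqueness: scaling separates the homogeneous degrees, and evaluation at Lambda
   recovers the coefficients of a homogeneous nc polynomial. *)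

From HB Require Import structures.
From mathcomp Require Import all_boot all_order all_algebra.
From Stdlib Require Import FunctionalExtensionality.
From mathcomp Require Import zify ring.
Set Implicit Arguments. Unset Strict Implicit. Unset Printing Implicit Defensive.
Import Order.TTheory GRing.Theory Num.Theory.
Local Open Scope ring_scope.

Lemma big_nat_partition (V : zmodType) (I : finType) (P : pred I) (g : I -> nat)
    M (F : I -> V) :
  (forall x, P x -> g x < M)%N ->
  \sum_(x | P x) F x = \sum_(i < M) \sum_(x | P x && (g x == i)) F x.
Proof.
move=> gP; symmetry.
under eq_bigr do rewrite big_mkcond.
rewrite exchange_big /= [RHS]big_mkcond; apply: eq_bigr => x _.
case Px: (P x) => /=; last by rewrite big1.
rewrite (bigD1 (Ordinal (gP x Px))) //= eqxx big1 ?addr0 // => i ne.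
by case: eqP => // gx; case/eqP: ne; apply: val_inj.
Qed.

Section Words.
Variables (K : fieldType) (d : nat).

Definition word_mx n (w : seq 'I_d) (X : tup K d n) : 'M[K]_n :=
  \big[mulmx/1%:M]_(i <- w) X i.

Lemma word_mx_nil n (X : tup K d n) : word_mx [::] X = 1%:M.
Proof. exact: big_nil. Qed.

Lemma word_mx_cons n i w (X : tup K d n) : word_mx (i :: w) X = X i *m word_mx w X.
Proof. exact: big_cons. Qed.

Lemma word_mx_scale n w (X : tup K d n) (s : K) :
  word_mx w (fun i => s *: X i) = s ^+ size w *: word_mx w X.
Proof.
elim: w => [|i w IH]; first by rewrite !word_mx_nil scale1r.
by rewrite !word_mx_cons IH -scalemxAl -!scalemxAr scalerA -exprS.
Qed.

Lemma word_evalE n j (w : j.-tuple 'I_d) (X : tup K d n) : word_eval w X = word_mx w X.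
Proof. by []. Qed.

Definition words_of_size j : seq (seq 'I_d) := [seq val t | t : j.-tuple 'I_d].

Fixpoint words_upto m : seq (seq 'I_d) :=
  if m is m'.+1 then words_upto m' ++ words_of_size m else words_of_size 0.

Lemma mem_words_of_size j w : (w \in words_of_size j) = (size w == j).
Proof.
apply/mapP/idP => [[t _ ->]|/eqP <-]; first by rewrite size_tuple.
by exists (in_tuple w); rewrite ?mem_enum.
Qed.

Lemma mem_words_upto m w : (w \in words_upto m) = (size w <= m)%N.
Proof.
elim: m => [|m IH] /=; first by rewrite mem_words_of_size leqn0.
by rewrite mem_cat IH mem_words_of_size [(_ <= m.+1)%N]leq_eqVlt orbC.
Qed.

Lemma uniq_words_upto m : uniq (words_upto m).
Proof.
have uniq_size j : uniq (words_of_size j).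
  by rewrite map_inj_uniq ?enum_uniq //; apply: val_inj.
elim: m => [|m IH] //=; rewrite cat_uniq IH uniq_size andbT /=.
by apply/hasPn => w; rewrite mem_words_of_size mem_words_upto => /eqP ->; rewrite ltnn.
Qed.

Lemma big_words_upto (V : zmodType) m (F : seq 'I_d -> V) :
  \sum_(w <- words_upto m) F w = \sum_(j < m.+1) \sum_(t : j.-tuple 'I_d) F t.
Proof.
elim: m => [|m IH] /=; first by rewrite big_ord1 big_map big_enum.
by rewrite big_cat IH [RHS]big_ord_recr /= big_map big_enum.
Qed.

Definition nwords m := size (words_upto m).

Definition word_at m (k : 'I_(nwords m)) : seq 'I_d := nth [::] (words_upto m) k.

Lemma big_word_at (V : zmodType) m (F : seq 'I_d -> V) :
  \sum_(k < nwords m) F (word_at k) = \sum_(w <- words_upto m) F w.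
Proof. by rewrite (big_nth [::]) big_mkord. Qed.

Lemma size_word_at m (k : 'I_(nwords m)) : (size (word_at k) <= m)%N.
Proof. by rewrite -mem_words_upto mem_nth. Qed.

Lemma word_at_inj m : injective (@word_at m).
Proof.
by move=> k k' /eqP; rewrite nth_uniq ?uniq_words_upto // => /eqP; apply: val_inj.
Qed.

Lemma word_at_onto m w : (size w <= m)%N -> exists k : 'I_(nwords m), word_at k = w.
Proof.
rewrite -mem_words_upto => wm; exists (Ordinal (etrans (index_mem _ _) wm)).
by rewrite /word_at nth_index.
Qed.

Lemma sum_word_at_eq (V : zmodType) m (F : seq 'I_d -> V) w :
  \sum_(k < nwords m) (if word_at k == w then F (word_at k) else 0)
  = if (size w <= m)%N then F w else 0.
Proof.
rewrite -big_mkcond /=; case: ifP => [/word_at_onto [k <-]|wm].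
  by rewrite (big_pred1 k) // => k'; rewrite /= (inj_eq (@word_at_inj m)).
by rewrite big_pred0 // => k; apply/eqP => kw; move: (size_word_at k); rewrite kw wm.
Qed.

Lemma nil_idx_subproof m : (index [::] (words_upto m) < nwords m)%N.
Proof. by rewrite index_mem mem_words_upto. Qed.

Definition nil_idx m : 'I_(nwords m) := Ordinal (nil_idx_subproof m).

Lemma word_at_nil_idx m : word_at (nil_idx m) = [::].
Proof. by rewrite /word_at nth_index // mem_words_upto. Qed.

(* The left shifts [e_w |-> e_(i w)] (and [0] if [i w] is too long). *)
Definition shift_tup m : tup K d (nwords m) :=
  fun i => \matrix_(a, b) ((word_at a == i :: word_at b)%:R : K).

Lemma word_mx_shift m w a b :
  word_mx w (shift_tup m) a b = ((word_at a == w ++ word_at b)%:R : K).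
Proof.
elim: w a => [|i w IH] a.
  by rewrite word_mx_nil mxE /= (inj_eq (@word_at_inj m)).
rewrite word_mx_cons mxE.
under eq_bigr => k _ do rewrite mxE IH mulr_natr mulrb.
rewrite (sum_word_at_eq m (fun w' => ((word_at a == i :: w')%:R : K))).
case: leqP => // wlong; case: eqP => // aw.
by move: (size_word_at a); rewrite aw /= ltnNge (ltnW wlong).
Qed.

End Words.

Section PowerSums.
Variables (K : fieldType) (N : lmodType K).

Definition psum M (v : nat -> N) (s : K) : N := \sum_(i < M) s ^+ i *: v i.

Lemma psum1 M v : psum M v 1 = \sum_(i < M) v i.
Proof. by rewrite /psum; apply: eq_bigr => i _; rewrite expr1n scale1r. Qed.

Lemma psumB M v w s : psum M (fun i => v i - w i) s = psum M v s - psum M w s.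
Proof. by rewrite /psum -sumrB; apply: eq_bigr => i _; rewrite scalerBr. Qed.

Lemma psum_widen B M v s : (B <= M)%N -> (forall i, (B <= i)%N -> v i = 0) ->
  psum M v s = psum B v s.
Proof.
move=> BM v0; rewrite /psum (big_ord_widen M (fun i => s ^+ i *: v i) BM) [RHS]big_mkcond.
by apply: eq_bigr => i _; case: ltnP => // /v0 ->; rewrite scaler0.
Qed.

Lemma psum_shift k M v s :
  s ^+ k *: psum M v s = psum (k + M) (fun i => if (k <= i)%N then v (i - k)%N else 0) s.
Proof.
rewrite /psum big_split_ord /= [X in X + _]big1 ?add0r => [|i _]; last first.
  by rewrite leqNgt ltn_ord scaler0.
rewrite scaler_sumr; apply: eq_bigr => i _.
by rewrite leq_addr addKn exprD scalerA.
Qed.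

Hypothesis K_infinite : infinite_field K.

Lemma uniq_nonzero_seq M : exists r : seq K, size r = M /\ uniq (0 :: r).
Proof.
elim: M => [|M [r [rM r_uniq]]]; first by exists [::].
have [x xr] := K_infinite (0 :: r).
exists (x :: r); split; first by rewrite /= rM.
by move: xr r_uniq; rewrite /= !inE !negb_or eq_sym => /andP [-> ->] /andP [-> ->].
Qed.

(* Evaluate at [M] distinct nonzero points and invert the Vandermonde matrix. *)
Lemma psum_eq0_coef M v : (forall s, s != 0 -> psum M v s = 0) ->
  forall i, (i < M)%N -> v i = 0.
Proof.
move=> v0 i iM; have [r [rM /andP [r0 r_uniq]]] := uniq_nonzero_seq M.
pose V : 'M[K]_M := Vandermonde M (\row_(k < M) r`_k).
have V_unit : V \in unitmx.
  rewrite unitmxE unitfE det_Vandermonde; apply/prodf_neq0 => x _.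
  apply/prodf_neq0 => y xy; rewrite !mxE subr_eq0 nth_uniq ?rM //.
  by rewrite neq_ltn xy orbT.
have Vv0 k : \sum_(j < M) V j k *: v j = 0.
  rewrite -[RHS](v0 r`_k); first by apply: eq_bigr => j _; rewrite !mxE.
  by apply: contraNneq r0 => <-; rewrite mem_nth ?rM.
pose i' := Ordinal iM.
have -> : v i = \sum_(j < M) (V *m invmx V) j i' *: v j.
  rewrite mulmxV // (bigD1 i') //= mxE eqxx scale1r big1 ?addr0 // => j ji.
  by rewrite mxE (negbTE ji) scale0r.
under eq_bigr do rewrite mxE scaler_suml.
rewrite exchange_big big1 // => k _.
under eq_bigr do rewrite mulrC -scalerA.
by rewrite -scaler_sumr Vv0 scaler0.
Qed.

Lemma psum_eq_coef M v w : (forall s, s != 0 -> psum M v s = psum M w s) ->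
  forall i, (i < M)%N -> v i = w i.
Proof.
move=> vw i iM; apply/eqP; rewrite -subr_eq0; apply/eqP; move: i iM.
by apply: psum_eq0_coef => s s0; rewrite psumB vw // subrr.
Qed.

End PowerSums.

Section PolyRep.
Variables (K : fieldType) (N : lmodType K) (d : nat).

Definition poly_rep n D (c : cmon d n D -> 'M[N]_n) (X : tup K d n) : 'M[N]_n :=
  \matrix_(a, b) \sum_(m : cmon d n D | (cmon_deg m <= D)%N) cmon_eval m X *: c m a b.

Definition hcomp n D (c : cmon d n D -> 'M[N]_n) (X : tup K d n) a b i : N :=
  \sum_(m : cmon d n D | (cmon_deg m <= D)%N && (cmon_deg m == i)) cmon_eval m X *: c m a b.

Lemma hcomp_eq0 n D (c : cmon d n D -> 'M[N]_n) X a b i : (D < i)%N -> hcomp c X a b i = 0.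
Proof.
move=> Di; rewrite /hcomp big_pred0 // => m.
by apply: contraTF Di => /andP [mD /eqP <-]; rewrite -leqNgt.
Qed.

Lemma cmon_eval_scale n D (m : cmon d n D) (X : tup K d n) (s : K) :
  cmon_eval m (fun i => s *: X i) = s ^+ cmon_deg m * cmon_eval m X.
Proof.
rewrite /cmon_eval /cmon_deg.
under eq_bigr do rewrite mxE exprMn.
by rewrite big_split /= prodrXr.
Qed.

Lemma poly_rep_scale n D (c : cmon d n D -> 'M[N]_n) X (s : K) a b :
  poly_rep c (fun i => s *: X i) a b = psum D.+1 (hcomp c X a b) s.
Proof.
rewrite mxE (big_nat_partition (g := fun m => cmon_deg m) (M := D.+1)) //.
apply: eq_bigr => i _; rewrite /hcomp scaler_sumr.
by apply: eq_bigr => m /andP [_ /eqP mi]; rewrite cmon_eval_scale mi scalerA.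
Qed.

(* Each monomial is a product of [cmon_deg m] affine functions of [s]. *)
Lemma poly_rep_affine n D (c : cmon d n D -> 'M[N]_n) (A B : tup K d n) a b :
  exists v : nat -> N, forall s : K,
    poly_rep c (fun i => A i + s *: B i) a b = psum D.+1 v s.
Proof.
pose lin (v : 'I_d * 'I_n * 'I_n) : {poly K} :=
  (B v.1.1 v.1.2 v.2)%:P * 'X + (A v.1.1 v.1.2 v.2)%:P.
pose P (m : cmon d n D) : {poly K} := \prod_v lin v ^+ m v.
exists (fun i => \sum_(m : cmon d n D | (cmon_deg m <= D)%N) (P m)`_i *: c m a b).
move=> s; rewrite mxE /psum.
have evalP m : cmon_eval m (fun i => A i + s *: B i) = (P m).[s].
  rewrite /cmon_eval /P horner_prod; apply: eq_bigr => v _.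
  by rewrite horner_exp /lin !hornerE !mxE addrC mulrC.
have size_lin v : (size (lin v) <= 2)%N.
  rewrite /lin size_MXaddC; case: ifP => // _.
  by rewrite ltnS size_polyC_leq1.
have size_P m : (size (P m) <= (cmon_deg m).+1)%N.
  apply: (big_ind2 (fun (p : {poly K}) (k : nat) => size p <= k.+1)%N).
  - by rewrite size_poly1.
  - by move=> p1 k1 p2 k2 h1 h2; apply: leq_trans (size_polyMleq _ _) _; lia.
  - move=> v _; apply: leq_trans (size_poly_exp_leq _ _) _.
    by have := size_lin v; case: (size (lin v)) => [|[|[|k]]] //= _; rewrite ?mul0n ?mul1n.
under eq_bigr => m mD.
  rewrite evalP (@horner_coef_wide _ D.+1 _ _ (leq_trans (size_P m) _)) // scaler_suml.
  under eq_bigr do rewrite mulrC -scalerA.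
  over.
by rewrite exchange_big; apply: eq_bigr => i _; rewrite scaler_sumr.
Qed.

Lemma poly_le_hcomp_top n D (c : cmon d n D -> 'M[N]_n) :
  (forall X a b, hcomp c X a b D = 0) ->
  poly_le_opt (poly_rep c) (if D is D'.+1 then Some D' else None).
Proof.
case: D c => [|D] c top0 /=.
  move=> X; apply/matrixP => a b; rewrite !mxE -[RHS](top0 X a b).
  by apply: eq_bigl => m; rewrite leqn0; case: eqP.
pose wid (m : cmon d n D) : cmon d n D.+1 := [ffun v => widen_ord (leqnSn D.+1) (m v)].
pose nar (m : cmon d n D.+1) : cmon d n D := [ffun v => inord (m v)].
have deg_wid m : cmon_deg (wid m) = cmon_deg m.
  by apply: eq_bigr => v _; rewrite ffunE.
have eval_wid m X : cmon_eval (wid m) X = cmon_eval m X.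
  by apply: eq_bigr => v _; rewrite ffunE.
have exp_le_deg (m : cmon d n D.+1) v : (m v <= cmon_deg m)%N.
  by rewrite /cmon_deg (bigD1 v) //= leq_addr.
exists (fun m => c (wid m)) => X; apply/matrixP => a b; rewrite !mxE.
rewrite (bigID (fun m => cmon_deg m == D.+1)) /= [X in X + _]top0 add0r.
rewrite (reindex_onto wid nar) => [|m /andP [mle mne]]; last first.
  have mD : (cmon_deg m <= D)%N by rewrite -ltnS ltn_neqAle mne mle.
  apply/ffunP => v; rewrite !ffunE; apply: val_inj.
  by rewrite /= inordK // ltnS (leq_trans (exp_le_deg m v)).
apply: eq_big => [m|m _]; last by rewrite eval_wid.
have -> : nar (wid m) = m by apply/ffunP => v; rewrite !ffunE inord_val.
by rewrite deg_wid eqxx andbT; case: (ltngtP (cmon_deg m) D.+1); lia.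
Qed.

End PolyRep.

Section NcFunction.
Variables (K : fieldType) (N : lmodType K) (d : nat) (f : ncfun N d).
Arguments f : clear implicits.
Hypothesis f_nc : nc_function f.

(* Conjugate [X (+) Y] by [[1, T; 0, 1]]. *)
Lemma nc_fun_upper_block n p (X : tup K d n) (Y : tup K d p) (T : 'M[K]_(n, p))
    (E : 'I_d -> 'M[K]_(n, p)) :
  (forall i, E i = T *m Y i - X i *m T) ->
  forall a b, f (n + p)%N (fun i => block_mx (X i) (E i) 0 (Y i)) (lshift p a) (rshift n b)
   = \sum_(k < p) T a k *: f p Y k b - \sum_(k < n) T k b *: f n X a k.
Proof.
move=> E_def a b; case: f_nc => f_sum f_sim.
pose S : 'M[K]_(n + p) := block_mx 1%:M T 0 1%:M.
pose S' : 'M[K]_(n + p) := block_mx 1%:M (- T) 0 1%:M.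
have SS' : S *m S' = 1%:M.
  by rewrite mulmx_block !mul1mx !mulmx1 !mul0mx !mulmx0 !addr0 add0r addNr scalar_mx_block.
have S_unit : S \in unitmx by case: (mulmx1_unit SS').
have invS : invmx S = S' by rewrite -[invmx S]mulmx1 -SS' mulmxA mulVmx // mul1mx.
have -> : (fun i => block_mx (X i) (E i) 0 (Y i))
        = (fun i => S *m block_mx (X i) 0 0 (Y i) *m invmx S).
  apply: functional_extensionality => i.
  rewrite invS !mulmx_block E_def !mul1mx !mulmx1 !mul0mx !mulmx0 !addr0 !add0r.
  by rewrite mul0mx add0r mulmxN addrC.
rewrite f_sim // f_sum /lactmx /ractmx !mxE big_split_ord /= invS.
under eq_bigr => i _ do rewrite /S block_mxEul mxE big_split_ord /=.
under [X in _ + X]eq_bigr => i _ do rewrite /S block_mxEur mxE big_split_ord /=.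
rewrite addrC; congr (_ + _).
  apply: eq_bigr => i _; congr (_ *: _).
  rewrite big1 ?add0r => [|j _]; last by rewrite block_mxEdl [X in _ *: X]mxE scaler0.
  under eq_bigr => j _ do rewrite block_mxEdr /S' block_mxEdr mxE.
  rewrite (bigD1 b) //= big1 ?addr0 ?eqxx ?scale1r // => j jb.
  by rewrite (negbTE jb) scale0r.
rewrite (bigD1 a) //= [X in _ + X]big1 ?addr0 => [|i ia]; last first.
  by rewrite mxE eq_sym (negbTE ia) scale0r.
rewrite mxE eqxx scale1r [X in _ + X]big1 ?addr0 => [|j _]; last first.
  by rewrite block_mxEur [X in _ *: X]mxE scaler0.
rewrite -sumrN; apply: eq_bigr => j _.
by rewrite block_mxEul /S' block_mxEur mxE scaleNr.
Qed.

Definition nc_coef m (w : seq 'I_d) : N :=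
  \sum_(k < nwords d m | word_at k == w) f (nwords d m) (shift_tup K m) k (nil_idx d m).

Lemma nc_coef_word_at m (k : 'I_(nwords d m)) :
  nc_coef m (word_at k) = f (nwords d m) (shift_tup K m) k (nil_idx d m).
Proof. by rewrite /nc_coef (big_pred1 k) // => k'; rewrite /= (inj_eq (@word_at_inj d m)). Qed.

Lemma nc_fun_nilpotent p (Z : tup K d p) m :
  (forall w, size w = m.+1 -> word_mx w Z = 0) ->
  forall a c, f p Z a c = \sum_(w <- words_upto d m) word_mx w Z a c *: nc_coef m w.
Proof.
move=> Z_nil a c; rewrite -big_word_at.
pose T : 'M[K]_(p, nwords d m) := \matrix_(k, b) word_mx (word_at b) Z k c.
have T_intertwines i : (0 : 'M[K]_(p, nwords d m)) = T *m shift_tup K m i - Z i *m T.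
  apply/esym/eqP; rewrite subr_eq0; apply/eqP/matrixP => k b; rewrite !mxE.
  under eq_bigr => b' _ do rewrite !mxE mulr_natr mulrb.
  rewrite (sum_word_at_eq m (fun w => word_mx w Z k c)).
  have -> : \sum_(j < p) Z i k j * T j b = word_mx (i :: word_at b) Z k c.
    by rewrite word_mx_cons mxE; apply: eq_bigr => j _; rewrite mxE.
  case: leqP => // long; rewrite Z_nil ?mxE //.
  by apply/eqP; rewrite /= eqSS eqn_leq size_word_at.
have := nc_fun_upper_block T_intertwines a (nil_idx d m).
case: f_nc => f_sum _; rewrite /= f_sum block_mxEur mxE => /eqP.
rewrite eq_sym subr_eq0 => /eqP.
rewrite (bigD1 c) //= [X in _ + X]big1 ?addr0 => [|k kc]; last first.
  by rewrite mxE word_at_nil_idx word_mx_nil mxE (negbTE kc) scale0r.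
rewrite mxE word_at_nil_idx word_mx_nil mxE eqxx scale1r => <-.
by apply: eq_bigr => k _; rewrite mxE nc_coef_word_at.
Qed.

Lemma nc_coef_stable j m w : (size w <= j)%N -> (j <= m)%N -> nc_coef j w = nc_coef m w.
Proof.
move=> wj jm; have [k <-] := word_at_onto wj; rewrite nc_coef_word_at.
rewrite (nc_fun_nilpotent (m := m)) => [|u u_size]; last first.
  apply/matrixP => x y; rewrite word_mx_shift mxE.
  case: eqP => // xu; have := size_word_at x; rewrite xu size_cat u_size.
  by move=> /leq_trans /(_ jm); rewrite ltnNge leq_addr.
have k_mem : word_at k \in words_upto d m.
  by rewrite mem_words_upto (leq_trans (size_word_at k)).
rewrite (bigD1_seq _ k_mem (uniq_words_upto d m)) /= big1 => [|u ku]; last first.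
  by rewrite word_mx_shift word_at_nil_idx cats0 eq_sym (negbTE ku) scale0r.
by rewrite word_mx_shift word_at_nil_idx cats0 eqxx scale1r addr0.
Qed.

Section Expansion.
Hypothesis f_poly : forall p, exists D (c : cmon d p D -> 'M[N]_p), f p =1 poly_rep c.

Lemma nc_fun_scaled_expand n (X : tup K d n) m a c :
  exists (D : nat) (v : nat -> N), forall s : K, s != 0 ->
    f n (fun i => s *: X i) a c =
    \sum_(w <- words_upto d m) s ^+ size w *: (word_mx w X a c *: nc_coef m w)
    - s ^+ m.+1 *: psum D.+1 v s.
Proof.
pose T (s : K) : 'M[K]_(n, nwords d m) :=
  \matrix_(k, b) (s ^+ size (word_at b) / s ^+ m.+1 * word_mx (word_at b) X k c).
pose E (i : 'I_d) : 'M[K]_(n, nwords d m) :=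
  \matrix_(k, b) (- ((size (word_at b) == m)%:R * word_mx (i :: word_at b) X k c)).
have E_def s : s != 0 -> forall i, E i = T s *m shift_tup K m i - (s *: X i) *m T s.
  move=> s0 i; apply/matrixP => k b; rewrite !mxE.
  under eq_bigr => b' _ do rewrite !mxE mulr_natr mulrb.
  rewrite (sum_word_at_eq m (fun w => s ^+ size w / s ^+ m.+1 * word_mx w X k c)).
  have -> : \sum_(j < n) (s *: X i) k j * T s j b =
      s ^+ (size (word_at b)).+1 / s ^+ m.+1 * word_mx (i :: word_at b) X k c.
    rewrite word_mx_cons mxE mulr_sumr; apply: eq_bigr => j _; rewrite !mxE.
    by rewrite (exprS s (size (word_at b))); ring.
  have := size_word_at b; rewrite leq_eqVlt => /orP [/eqP bm|bm].
    by rewrite /= bm ltnn eqxx sub0r mul1r divff ?mul1r // expf_neq0.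
  by rewrite /= bm subrr ltn_eqF // mul0r oppr0.
have [D [c' fc']] := f_poly (n + nwords d m).
pose A i : 'M[K]_(n + nwords d m) := block_mx 0 (E i) 0 (shift_tup K m i).
pose B i : 'M[K]_(n + nwords d m) := block_mx (X i) 0 0 0.
have [v fv] := poly_rep_affine c' A B (lshift _ a) (rshift n (nil_idx d m)).
exists D, v => s s0.
have := nc_fun_upper_block (E_def s s0) a (nil_idx d m).
have -> : (fun i => block_mx (s *: X i) (E i) 0 (shift_tup K m i)) = (fun i => A i + s *: B i).
  apply: functional_extensionality => i.
  by rewrite /A /B scale_block_mx add_block_mx !scaler0 !addr0 add0r.
rewrite fc' fv => fAB.
have T_col : \sum_k T s k (nil_idx d m) *: f n (fun i => s *: X i) a k =
    (s ^+ m.+1)^-1 *: f n (fun i => s *: X i) a c.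
  rewrite (bigD1 c) //= big1 ?addr0 => [|k kc]; last first.
    by rewrite mxE word_at_nil_idx word_mx_nil mxE (negbTE kc) mulr0 scale0r.
  by rewrite mxE word_at_nil_idx word_mx_nil mxE eqxx mulr1 expr0 mul1r.
have T_row : s ^+ m.+1 *: \sum_k T s a k *: f _ (shift_tup K m) k (nil_idx d m) =
    \sum_(w <- words_upto d m) s ^+ size w *: (word_mx w X a c *: nc_coef m w).
  rewrite -big_word_at scaler_sumr; apply: eq_bigr => k _.
  rewrite mxE nc_coef_word_at !scalerA; congr (_ *: _).
  by field; rewrite expf_neq0.
rewrite fAB scalerBr T_row T_col scalerA divff ?expf_neq0 // scale1r.
by rewrite opprB addrCA subrr addr0.
Qed.

Hypothesis K_infinite : infinite_field K.

Lemma nc_fun_expand n m D (c : cmon d n D -> 'M[N]_n) :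
  f n =1 poly_rep c -> (D <= m)%N ->
  forall (X : tup K d n) a b,
    f n X a b = \sum_(w <- words_upto d m) word_mx w X a b *: nc_coef m w.
Proof.
move=> fc Dm X a b; have [D' [v fv]] := nc_fun_scaled_expand X m a b.
pose M := (m.+1 + D'.+1)%N.
pose R i := \sum_(k < nwords d m | size (word_at k) == i)
  word_mx (word_at k) X a b *: nc_coef m (word_at k).
have R_part M' (F : nat -> seq 'I_d -> N) : (m < M')%N ->
    \sum_(w <- words_upto d m) F (size w) w
    = \sum_(i < M') \sum_(k < nwords d m | size (word_at k) == i) F i (word_at k).
  move=> mM'; rewrite -big_word_at.
  rewrite [LHS](big_nat_partition (g := fun k => size (word_at k)) (M := M')).
    by apply: eq_bigr => i _; apply: eq_big => // k /eqP ->.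
  by move=> k _; apply: leq_ltn_trans mM'; exact: size_word_at.
pose v' i := if (m.+1 <= i)%N then v (i - m.+1)%N else 0.
have DM : (D.+1 <= M)%N by rewrite /M; lia.
have hcomp_R : forall i, (i < M)%N -> hcomp c X a b i = R i - v' i.
  apply: (psum_eq_coef K_infinite) => s s0.
  rewrite (psum_widen (B := D.+1)) // => [|j Dj]; last exact: hcomp_eq0.
  rewrite -poly_rep_scale -fc psumB -psum_shift fv //; congr (_ - _).
  rewrite (R_part M (fun i w => s ^+ i *: (word_mx w X a b *: nc_coef m w))) ?leq_addr //.
  by apply: eq_bigr => i _; rewrite scaler_sumr.
have X1 : (fun i => 1 *: X i) = X by apply: functional_extensionality => i; rewrite scale1r.
transitivity (f n (fun i => 1 *: X i) a b); first by rewrite X1.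
rewrite fc poly_rep_scale -(psum_widen (M := m.+1)) // => [|j Dj]; last exact: hcomp_eq0.
rewrite psum1 (R_part m.+1 (fun _ w => word_mx w X a b *: nc_coef m w)) //.
apply: eq_bigr => i _; rewrite hcomp_R ?(leq_trans (ltn_ord i)) ?leq_addr //.
by rewrite /v' leqNgt ltn_ord subr0.
Qed.

End Expansion.

Definition nc_part j : hncpoly N d j := fun w => nc_coef j w.
Arguments nc_part : clear implicits.

Lemma hnc_eval_scale j (p : hncpoly N d j) n (X : tup K d n) (s : K) a b :
  hnc_eval p (fun i => s *: X i) a b = s ^+ j *: hnc_eval p X a b.
Proof.
rewrite !mxE scaler_sumr; apply: eq_bigr => t _.
by rewrite word_evalE word_mx_scale mxE size_tuple scalerA.
Qed.

Lemma hnc_eval_shift j (p : hncpoly N d j) (w : j.-tuple 'I_d) (k : 'I_(nwords d j)) :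
  word_at k = w -> hnc_eval p (shift_tup K j) k (nil_idx d j) = p w.
Proof.
move=> kw; rewrite mxE (bigD1 w) //= big1 => [|t tw].
  rewrite word_evalE word_mx_shift word_at_nil_idx cats0 kw.
  by rewrite eqxx scale1r addr0.
rewrite word_evalE word_mx_shift word_at_nil_idx cats0 kw.
by rewrite val_eqE eq_sym (negbTE tw) scale0r.
Qed.

Section Decomposition.
Variable L : nat -> option nat.
Hypotheses (K_infinite : infinite_field K) (f_deg : forall n, poly_deg (f n) (L n)).

Lemma poly_rep_of_deg n : exists D (c : cmon d n D -> 'M[N]_n),
  [/\ f n =1 poly_rep c, forall l, L n = Some l -> D = l
    & forall X a b j, (obound (L n) <= j)%N -> hcomp c X a b j = 0].
Proof.
have := f_deg n; case: (L n) => [l [[c fc] _]|/= f0].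
  by exists l, c; split=> // [l' [] //|X a b j]; apply: hcomp_eq0.
exists 0%N, (fun _ => 0); split=> // [X|X a b j _].
  by rewrite f0; apply/matrixP => a b; rewrite !mxE big1 // => m _; rewrite scaler0.
by rewrite /hcomp big1 // => m _; rewrite mxE scaler0.
Qed.

Lemma f_poly_rep n : exists D (c : cmon d n D -> 'M[N]_n), f n =1 poly_rep c.
Proof. by have [D [c [fc _ _]]] := poly_rep_of_deg n; exists D, c. Qed.

Lemma nc_fun_sum_parts n m D (c : cmon d n D -> 'M[N]_n) :
  f n =1 poly_rep c -> (D <= m)%N ->
  forall X, f n X = \sum_(j < m.+1) hnc_eval (nc_part j) X.
Proof.
move=> fc Dm X; apply/matrixP => a b.
rewrite (nc_fun_expand f_poly_rep K_infinite fc Dm) summxE big_words_upto.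
apply: eq_bigr => j _; rewrite mxE; apply: eq_bigr => t _.
by rewrite /nc_part (nc_coef_stable (m := m) (eq_leq (size_tuple t))) // -ltnS.
Qed.

Lemma hcomp_nc_part n D (c : cmon d n D -> 'M[N]_n) :
  f n =1 poly_rep c -> forall X a b i, hcomp c X a b i = hnc_eval (nc_part i) X a b.
Proof.
move=> fc X a b i; pose m := maxn D i.
apply: (psum_eq_coef K_infinite (M := m.+1) (v := hcomp c X a b)
  (w := fun j => hnc_eval (nc_part j) X a b)) (leq_maxr D i) => s s0.
rewrite (psum_widen (B := D.+1)) ?ltnS ?leq_maxl // => [|j Dj]; last exact: hcomp_eq0.
rewrite -poly_rep_scale -fc (nc_fun_sum_parts fc (leq_maxl D i)) summxE.
by apply: eq_bigr => j _; rewrite hnc_eval_scale.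
Qed.

Lemma nc_part_vanish n j : (obound (L n) <= j)%N -> hnc_vanishes (nc_part j) n.
Proof.
move=> Lj X; have [D [c [fc _ c_top]]] := poly_rep_of_deg n.
by apply/matrixP => a b; rewrite [RHS]mxE -(hcomp_nc_part fc) c_top.
Qed.

Lemma nc_part_top n l : L n = Some l -> ~ hnc_vanishes (nc_part l) n.
Proof.
move=> Ln top0; have [D [c [fc /(_ l Ln) Dl _]]] := poly_rep_of_deg n.
subst D; have := f_deg n; rewrite Ln => -[_]; apply.
rewrite (functional_extensionality _ _ fc); apply: poly_le_hcomp_top => X a b.
by rewrite (hcomp_nc_part fc) top0 mxE.
Qed.

Lemma nc_decomp_nc_part : nc_decomp f L nc_part.
Proof.
move=> n; split; [exact: nc_part_vanish | split; first exact: nc_part_top].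
move=> X; have [D [c [fc Dl _]]] := poly_rep_of_deg n.
case Ln: (L n) => [l|] /=; first by rewrite (nc_fun_sum_parts fc (eq_leq (Dl l Ln))).
by have := f_deg n; rewrite Ln big_ord0 => ->.
Qed.

Lemma nc_decomp_eval_uniq gs : nc_decomp f L gs ->
  forall j n (X : tup K d n) a b, hnc_eval (gs j) X a b = hnc_eval (nc_part j) X a b.
Proof.
move=> gs_dec j n X a b.
have [gs_hi [_ gs_sum]] := gs_dec n; have [fs_hi [_ fs_sum]] := nc_decomp_nc_part n.
case: (leqP (obound (L n)) j) => Lj; first by rewrite (gs_hi j Lj X) (fs_hi j Lj X).
apply: (psum_eq_coef K_infinite (v := fun j => hnc_eval (gs j) X a b)
  (w := fun j => hnc_eval (nc_part j) X a b)) Lj => s _.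
have := congr1 (fun Y : 'M[N]_n => Y a b) (gs_sum (fun i => s *: X i)).
rewrite fs_sum !summxE /psum => sums.
under eq_bigr do rewrite -hnc_eval_scale.
by under [RHS]eq_bigr do rewrite -hnc_eval_scale.
Qed.

Lemma nc_decomp_uniq gs : nc_decomp f L gs -> forall j (w : j.-tuple 'I_d), gs j w = nc_part j w.
Proof.
move=> gs_dec j w; have [k kw] := word_at_onto (eq_leq (size_tuple w)).
by rewrite -(hnc_eval_shift _ kw) -[RHS](hnc_eval_shift _ kw) nc_decomp_eval_uniq.
Qed.

End Decomposition.

End NcFunction.

Theorem theorem6p4 (K : fieldType) (N : lmodType K) (d : nat)
    (f : ncfun N d) (L : nat -> option nat) :
  infinite_field K ->
  nc_function f ->
  (forall n : nat, poly_deg (f n) (L n)) ->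
  exists fs : forall j : nat, hncpoly N d j,
    nc_decomp f L fs /\
    (forall gs : forall j : nat, hncpoly N d j,
        nc_decomp f L gs -> forall j (w : j.-tuple 'I_d), gs j w = fs j w).
Proof.
move=> K_infinite f_nc f_deg; exists (nc_part f); split.
  exact: nc_decomp_nc_part.
exact: nc_decomp_uniq.
Qed.
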